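(* Let $\pi$ be a model with data space $Y$ and parameter space $\Theta$, $f$ a test quantity and $\phi$ a posterior family such that neither $\pi$ nor $\phi$ has ties with respect to $f$. Then $\phi$ passes continuous SBC with respect to $f$ if and only if for all $x\in[0,1]$ $$\int_Y\int_\Theta \mathbb{I}\Big[\int_\Theta \mathbb{I}[f(\theta,y)<f(\tilde\theta,y)]\,\phi(\theta\mid y)\,\mathrm{d}\theta\le x\Big]\,\pi_{\text{obs}}(y\mid\tilde\theta)\pi_{\text{prior}}(\tilde\theta)\,\mathrm{d}\tilde\theta\,\mathrm{d}y=x.$$
   Context: Model $\pi$: prior density $\pi_{\text{prior}}(\theta)$ on $\Theta$, observation density $\pi_{\text{obs}}(y\mid\theta)$ on $Y$, $\pi_{\text{marg}}(y)=\int_\Theta\pi_{\text{obs}}(y\mid\theta)\pi_{\text{prior}}(\theta)\,\mathrm{d}\theta$, $\pi_{\text{post}}(\theta\mid y)=\pi_{\text{obs}}(y\mid\theta)\pi_{\text{prior}}(\theta)/\pi_{\text{marg}}(y)$. A posterior family is $\phi:\Theta\times Y\to\mathbb{R}^+$ with $\int_\Theta\phi(\theta\mid y)\,\mathrm{d}\theta=1$ for all $y$; a test quantity is a measurable $f:\Theta\times Y\to\mathbb{R}$. $C_{\phi,f}(s\mid y)=\int_\Theta\mathbb{I}[f(\theta,y)\le s]\phi(\theta\mid y)\,\mathrm{d}\theta$, $D_{\phi,f}(s\mid y)=\int_\Theta\mathbb{I}[f(\theta,y)=s]\phi(\theta\mid y)\,\mathrm{d}\theta$, $D_f(s\mid y)=\int_\Theta\mathbb{I}[f(\theta,y)=s]\pi_{\text{post}}(\theta\mid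 y)\,\mathrm{d}\theta$. $\pi$ has ties w.r.t. $f$ if $D_f(f(\tilde\theta,y)\mid y)>0$ for some $y,\tilde\theta$; $\phi$ has ties w.r.t. $f$ if $D_{\phi,f}(f(\tilde\theta,y)\mid y)>0$ for some $y,\tilde\theta$. With $U\sim\mathrm{uniform}[0,1]$, $r_{\phi,f}(x\mid\tilde\theta,y)=\Pr\big(C_{\phi,f}(f(\tilde\theta,y)\mid y)-U\,D_{\phi,f}(f(\tilde\theta,y)\mid y)\le x\big)$, $q_{\phi,f}(x\mid y)=\int_\Theta\pi_{\text{post}}(\tilde\theta\mid y)r_{\phi,f}(x\mid\tilde\theta,y)\,\mathrm{d}\tilde\theta$. $\phi$ passes continuous SBC w.r.t. $f$ if $\int_Yq_{\phi,f}(x\mid y)\pi_{\text{marg}}(y)\,\mathrm{d}y=x$ for all $x\in[0,1]$. *)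

From HB Require Import structures.
From mathcomp Require Import all_boot all_order all_algebra.
From mathcomp Require Import all_classical all_reals all_analysis.
Set Implicit Arguments. Unset Strict Implicit. Unset Printing Implicit Defensive.
Import Order.TTheory GRing.Theory Num.Theory.
Local Open Scope classical_set_scope.
Local Open Scope ring_scope.
Local Open Scope ereal_scope.

Section SBC.
Context (R : realType) (d1 d2 : measure_display)
  (Theta : measurableType d1) (Y : measurableType d2)
  (muT : {measure set Theta -> \bar R}) (muY : {measure set Y -> \bar R}).

(* prior : pi_prior(theta);  obs y th : pi_obs(y | th) *)
Variables (prior : Theta -> R) (obs : Y -> Theta -> R).

Definition marg (y : Y) : \bar R :=
  \int[muT]_th ((obs y th * prior th)%R)%:E.

(* pi_post(th | y) ; division by 0 gives 0 in mathcomp *)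
Definition post (th : Theta) (y : Y) : R :=
  (obs y th * prior th / fine (marg y))%R.

Variables (phi : Theta -> Y -> R) (f : Theta -> Y -> R).

Definition Cphi (s : R) (y : Y) : \bar R :=
  \int[muT]_th ((\1_[set t | (f t y <= s)%R] th * phi th y)%R)%:E.

Definition Dphi (s : R) (y : Y) : \bar R :=
  \int[muT]_th ((\1_[set t | f t y = s] th * phi th y)%R)%:E.

Definition Dpost (s : R) (y : Y) : \bar R :=
  \int[muT]_th ((\1_[set t | f t y = s] th * post th y)%R)%:E.

Definition model_has_ties : Prop :=
  exists (y : Y) (tth : Theta), 0 < Dpost (f tth y) y.

Definition family_has_ties : Prop :=
  exists (y : Y) (tth : Theta), 0 < Dphi (f tth y) y.

(* r_{phi,f}(x | tth, y) = Pr_{U ~ uniform[0,1]}(C - U D <= x) *)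
Definition rphi (x : R) (tth : Theta) (y : Y) : \bar R :=
  (@lebesgue_measure R)
    (`[0%R, 1%R] `&` [set u : R | Cphi (f tth y) y - u%:E * Dphi (f tth y) y <= x%:E]).

Definition qphi (x : R) (y : Y) : \bar R :=
  \int[muT]_tth ((post tth y)%:E * rphi x tth y).

Definition passes_continuous_SBC : Prop :=
  forall x : R, (0 <= x <= 1)%R ->
    \int[muY]_y (qphi x y * marg y) = x%:E.

End SBC.

From Pilot Require Import Defs.
From HB Require Import structures.
From mathcomp Require Import all_boot all_order all_algebra.
From mathcomp Require Import all_classical all_reals all_analysis.
From mathcomp Require Import measurable_realfun ring.
Import Order.TTheory GRing.Theory Num.Theory.
Local Open Scope classical_set_scope.
Local Open Scope ring_scope.
Local Open Scope ereal_scope.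

(** Without ties for [phi] the level sets of the test quantity are
    [phi]-null, so [Cphi] at [f tth y] is the strict rank mass [Cphi_lt] and
    the randomised rank [rphi x tth y] is the indicator of
    [Cphi_lt (f tth y) y <= x].  As [post = obs * prior / marg], the
    normaliser cancels in [qphi x y * marg y], which becomes the inner integral
    of the claimed identity.  This only fails where [marg y = +oo]; but [marg]
    has total mass 1, so it is finite almost everywhere and the two integrals
    over [Y] agree for every [x]. *)

(* The statement only assumes [sigma_finite setT mu] for plain measures; this
   alias equips them with the sigma-finite structure Fubini-Tonelli needs. *)
Definition sigma_finite_measure_of {d} {T : measurableType d} {R : realType}
  {mu : {measure set T -> \bar R}} (smu : sigma_finite setT mu) :
  set T -> \bar R := mu.

HB.instance Definition _ d (T : measurableType d) (R : realType)
  (mu : {measure set T -> \bar R}) (smu : sigma_finite setT mu) :=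
  Measure.on (sigma_finite_measure_of smu).

HB.instance Definition _ d (T : measurableType d) (R : realType)
  (mu : {measure set T -> \bar R}) (smu : sigma_finite setT mu) :=
  Measure_isSigmaFinite.Build _ _ _ (sigma_finite_measure_of smu) smu.

Lemma measurable_fun_partial_integral {d1 d2} {T1 : measurableType d1}
    {T2 : measurableType d2} {R : realType} {mu : {measure set T1 -> \bar R}}
    {F : T1 * T2 -> \bar R} :
  sigma_finite setT mu -> measurable_fun setT F -> (forall p, 0 <= F p) ->
  measurable_fun setT (fun y => \int[mu]_x F (x, y)).
Proof.
move=> smu mF F0.
exact: (@measurable_fun_fubini_tonelli_G _ _ _ _ _
  (sigma_finite_measure_of smu) F mF F0).
Qed.

Section real_valued.
Context d (T : measurableType d) (R : realType).

Lemma measurable_ltr_set (a b : T -> R) :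
  measurable_fun setT a -> measurable_fun setT b ->
  measurable [set x | (a x < b x)%R].
Proof.
move=> ma mb; rewrite -[X in measurable X]setTI.
exact: (measurable_fun_ltr ma mb measurableT (Y:=[set true])).
Qed.

Lemma indic_le_split (g : T -> R) (s : R) (t : T) :
  \1_[set t | (g t <= s)%R] t =
  (\1_[set t | (g t < s)%R] t + \1_[set t | g t = s] t)%R :> R.
Proof.
rewrite !indicE /in_mem /= /in_set /= !asboolb.
have [h|h|e] := ltgtP (g t) s; last by rewrite asboolT ?add0r.
all: by rewrite asboolF ?addr0 // => e; rewrite e ltxx in h.
Qed.

Lemma integral_indic_le_split (mu : {measure set T -> \bar R}) (g h : T -> R)
    (s : R) :
  measurable_fun setT g -> measurable_fun setT h -> (forall t, 0 <= h t)%R ->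
  \int[mu]_t ((\1_[set t | (g t <= s)%R] t * h t)%R)%:E =
  \int[mu]_t ((\1_[set t | (g t < s)%R] t * h t)%R)%:E +
  \int[mu]_t ((\1_[set t | g t = s] t * h t)%R)%:E.
Proof.
move=> mg mh h0.
have mlt : measurable [set t | (g t < s)%R].
  exact: measurable_ltr_set mg (measurable_cst _).
have meq : measurable [set t | g t = s].
  rewrite -[X in measurable X]setTI.
  exact: mg measurableT _ (measurable_set1 s).
rewrite -ge0_integralD //.
- by apply: eq_integral => t _; rewrite -EFinD -mulrDl indic_le_split.
- by move=> t _; rewrite lee_fin mulr_ge0.
- by apply/measurable_EFinP; apply: measurable_funM.
- by move=> t _; rewrite lee_fin mulr_ge0.
- by apply/measurable_EFinP; apply: measurable_funM.
Qed.

End real_valued.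

Lemma lebesgue_measure_unit_itvI_cst {T : Type} {R : realType} (A : set T)
    (a : T) :
  (@lebesgue_measure R) (`[0%R, 1%R] `&` [set _ | A a]) = (\1_A a)%:E.
Proof.
rewrite indicE; have [Aa|nAa] := pselect (A a).
- rewrite mem_set // (_ : [set _ | A a] = setT) ?setIT; last first.
    by apply/seteqP; split.
  by rewrite lebesgue_measure_itv /= lte_fin ltr01 sube0.
- rewrite memNset // (_ : [set _ | A a] = set0) ?setI0 ?measure0 //.
  by apply/seteqP; split.
Qed.

Section sbc_without_family_ties.
Context {R : realType} {d1 d2 : measure_display} {Theta : measurableType d1}
  {Y : measurableType d2} {muT : {measure set Theta -> \bar R}}
  {muY : {measure set Y -> \bar R}} {prior : Theta -> R} {obs : Y -> Theta -> R}
  {phi : Theta -> Y -> R} {f : Theta -> Y -> R}.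
Hypotheses (sfT : sigma_finite setT muT) (sfY : sigma_finite setT muY)
  (mprior : measurable_fun setT prior) (prior0 : forall th, (0 <= prior th)%R)
  (prior1 : \int[muT]_th (prior th)%:E = 1)
  (mobs : measurable_fun setT (fun p : Theta * Y => obs p.2 p.1))
  (obs0 : forall y th, (0 <= obs y th)%R)
  (obs1 : forall th, \int[muY]_y (obs y th)%:E = 1)
  (mphi : measurable_fun setT (fun p : Theta * Y => phi p.1 p.2))
  (phi0 : forall th y, (0 <= phi th y)%R)
  (mf : measurable_fun setT (fun p : Theta * Y => f p.1 p.2)).

Local Notation marg := (marg muT prior obs).
Local Notation Cphi := (Cphi muT phi f).
Local Notation Dphi := (Dphi muT phi f).
Local Notation rphi := (rphi muT phi f).
Local Notation qphi := (qphi muT prior obs phi f).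

Definition Cphi_lt (s : R) (y : Y) : \bar R :=
  \int[muT]_th ((\1_[set t | (f t y < s)%R] th * phi th y)%R)%:E.

Definition joint_rank_le (x : R) (y : Y) : \bar R :=
  \int[muT]_tth ((\1_[set t | (Cphi_lt (f t y) y <= x%:E)%E] tth
                  * (obs y tth * prior tth))%R)%:E.

Let mf_at y : measurable_fun setT (f ^~ y).
Proof. exact: measurableT_comp mf (pair2_measurable y). Qed.

Let mphi_at y : measurable_fun setT (phi ^~ y).
Proof. exact: measurableT_comp mphi (pair2_measurable y). Qed.

Let mjoint :
  measurable_fun setT (fun p : Theta * Y => (obs p.2 p.1 * prior p.1)%R).
Proof.
by apply: measurable_funM => //; exact: measurableT_comp mprior measurable_fst.
Qed.

Lemma measurable_fun_Cphi_lt_rank :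
  measurable_fun setT (fun p : Theta * Y => Cphi_lt (f p.1 p.2) p.2).
Proof.
have mpr : measurable_fun setT (fun q : Theta * (Theta * Y) => (q.1, q.2.2)).
  apply: measurable_fun_pair => //.
  exact: measurableT_comp measurable_snd measurable_snd.
apply: (measurable_fun_partial_integral
  (F := fun q : Theta * (Theta * Y) =>
     ((\1_[set q | (f q.1 q.2.2 < f q.2.1 q.2.2)%R] q * phi q.1 q.2.2)%R)%:E)).
- exact: sfT.
- apply/measurable_EFinP; apply: measurable_funM.
    apply: measurable_indic; apply: measurable_ltr_set.
      exact: measurableT_comp mf mpr.
    exact: measurableT_comp mf measurable_snd.
  exact: measurableT_comp mphi mpr.
- by move=> q; rewrite lee_fin mulr_ge0.
Qed.

Lemma measurable_fun_joint_rank_le x : measurable_fun setT (joint_rank_le x).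
Proof.
apply: (measurable_fun_partial_integral
  (F := fun p : Theta * Y =>
     ((\1_[set p | (Cphi_lt (f p.1 p.2) p.2 <= x%:E)%E] p
       * (obs p.2 p.1 * prior p.1))%R)%:E)).
- exact: sfT.
- apply/measurable_EFinP; apply: measurable_funM => //.
  apply: measurable_indic; rewrite -[X in measurable X]setTI.
  exact: measurable_lee measurable_fun_Cphi_lt_rank (measurable_cst _).
- by move=> p; rewrite lee_fin !mulr_ge0.
Qed.

Lemma measurable_fun_marg : measurable_fun setT marg.
Proof.
apply: (measurable_fun_partial_integral
  (F := fun p : Theta * Y => ((obs p.2 p.1 * prior p.1)%R)%:E)) => //.
- by apply/measurable_EFinP.
- by move=> p; rewrite lee_fin mulr_ge0.
Qed.

Lemma marg_ge0 y : 0 <= marg y.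
Proof. by apply: integral_ge0 => t _; rewrite lee_fin mulr_ge0. Qed.

Lemma integral_marg : \int[muY]_y marg y = 1.
Proof.
pose F := fun p : Theta * Y => ((obs p.2 p.1 * prior p.1)%R)%:E.
have mF : measurable_fun setT F by apply/measurable_EFinP.
have F0 p : 0 <= F p by rewrite lee_fin mulr_ge0.
rewrite -(@fubini_tonelli _ _ _ _ _ (sigma_finite_measure_of sfT)
                            (sigma_finite_measure_of sfY) F mF F0) /= -prior1.
apply: eq_integral => t _; rewrite /F /=.
under eq_integral do rewrite EFinM.
rewrite ge0_integralZr ?obs1 ?mul1e ?lee_fin //.
- by apply/measurable_EFinP; exact: measurableT_comp mobs (pair1_measurable t).
- by move=> y _; rewrite lee_fin.
Qed.

Lemma marg_fin_num_ae : {ae muY, forall y, marg y \is a fin_num}.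
Proof.
have : {ae muY, forall y, setT y -> marg y \is a fin_num}.
  apply: integrable_ae => //; apply/integrableP.
  split; first exact: measurable_fun_marg.
  under eq_integral do rewrite gee0_abs ?marg_ge0 //.
  by rewrite integral_marg ltey.
by apply: filterS => y; apply.
Qed.

Let mrank_le x y : measurable [set t | (Cphi_lt (f t y) y <= x%:E)%E].
Proof.
rewrite -[X in measurable X]setTI; apply: measurable_lee => //.
exact: measurableT_comp measurable_fun_Cphi_lt_rank (pair2_measurable y).
Qed.

Let mjoint_at y : measurable_fun setT (fun t => (obs y t * prior t)%R).
Proof. exact: measurableT_comp mjoint (pair2_measurable y). Qed.

Lemma joint_rank_le_ge0 x y : 0 <= joint_rank_le x y.
Proof. by apply: integral_ge0 => t _; rewrite lee_fin !mulr_ge0. Qed.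

Lemma joint_rank_le_marg x y : joint_rank_le x y <= marg y.
Proof.
apply: ge0_le_integral => //.
- by move=> t _; rewrite lee_fin !mulr_ge0.
- by apply/measurable_EFinP; apply: measurable_funM.
- by apply/measurable_EFinP.
- by move=> t _; rewrite lee_fin ler_piMl ?mulr_ge0 // indicE lern1 leq_b1.
Qed.

Lemma Cphi_split s y : Cphi s y = Cphi_lt s y + Dphi s y.
Proof.
exact: (@integral_indic_le_split _ _ _ muT _ _ s (mf_at y) (mphi_at y)
  (phi0 ^~ y)).
Qed.

Hypothesis no_family_ties : ~ family_has_ties muT phi f.

Lemma Dphi_rank_eq0 t y : Dphi (f t y) y = 0.
Proof.
apply/eqP; rewrite eq_le integral_ge0 ?andbT; last first.
  by move=> s _; rewrite lee_fin mulr_ge0 // indicE.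
by rewrite leNgt; apply/negP => D0; apply: no_family_ties; exists y, t.
Qed.

Lemma rphi_rank_indic x t y :
  rphi x t y = (\1_[set t | (Cphi_lt (f t y) y <= x%:E)%E] t)%:E.
Proof.
rewrite /Defs.rphi Cphi_split Dphi_rank_eq0 adde0.
rewrite -(lebesgue_measure_unit_itvI_cst
  [set t | (Cphi_lt (f t y) y <= x%:E)%E]).
congr (_ (_ `&` _)); apply/seteqP; split => u; by rewrite /= mulr0 oppr0 adde0.
Qed.

Lemma qphi_marg_fin x y :
  marg y \is a fin_num -> qphi x y * marg y = joint_rank_le x y.
Proof.
move=> /fineK margE; set r := fine (marg y) in margE *; rewrite -margE.
rewrite /Defs.qphi; under eq_integral do rewrite rphi_rank_indic -EFinM.
have [r0|rN0] := eqVneq r 0%R.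
  rewrite r0 mule0; apply/eqP; rewrite eq_le integral_ge0 ?andbT.
    by have := joint_rank_le_marg x y; rewrite -margE r0.
  by move=> t _; rewrite lee_fin !mulr_ge0.
have r_ge0 : (0 <= r)%R by rewrite fine_ge0 // marg_ge0.
rewrite -ge0_integralZr ?lee_fin //.
- apply: eq_integral => t _; rewrite -EFinM /Defs.post -/r; congr EFin.
  by field.
- apply/measurable_EFinP; apply: measurable_funM; last exact: measurable_indic.
  exact: measurable_funM.
- by move=> t _; rewrite lee_fin mulr_ge0 // /Defs.post !mulr_ge0 ?invr_ge0.
Qed.

(* [post] divides by [fine +oo = 0], and [_ / 0 = 0]. *)
Lemma qphi_marg_infty x y : marg y = +oo -> qphi x y = 0.
Proof.
move=> margoo; rewrite /Defs.qphi /Defs.post margoo /=.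
under eq_integral do rewrite invr0 mulr0 mul0e.
by rewrite integral0.
Qed.

Lemma qphi_margE x y :
  qphi x y * marg y = (\1_[set y | (marg y < +oo)%E] y)%:E * joint_rank_le x y.
Proof.
rewrite indicE; have [margfin|marginf] := boolP (marg y < +oo).
  by rewrite mem_set // mul1e qphi_marg_fin // ge0_fin_numE ?marg_ge0.
rewrite memNset ?mul0e ?qphi_marg_infty ?mul0e //; last exact/negP.
by apply/eqP; rewrite -leye_eq leNgt.
Qed.

Lemma integral_qphi_marg x :
  \int[muY]_y (qphi x y * marg y) = \int[muY]_y joint_rank_le x y.
Proof.
under eq_integral do rewrite qphi_margE.
apply: ge0_ae_eq_integral => //.
- apply: emeasurable_funM; last exact: measurable_fun_joint_rank_le.
  apply/measurable_EFinP; apply: measurable_indic.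
  rewrite -[X in measurable X]setTI.
  exact: measurable_lte measurable_fun_marg (measurable_cst _).
- exact: measurable_fun_joint_rank_le.
- by move=> y _; rewrite mule_ge0 ?joint_rank_le_ge0 // lee_fin indicE.
- by move=> y _; exact: joint_rank_le_ge0.
- apply: filterS marg_fin_num_ae => y margfin _.
  by rewrite indicE mem_set ?mul1e //= -ge0_fin_numE ?marg_ge0.
Qed.

End sbc_without_family_ties.

Theorem mainTheorem13 (R : realType) (d1 d2 : measure_display)
  (Theta : measurableType d1) (Y : measurableType d2)
  (muT : {measure set Theta -> \bar R}) (muY : {measure set Y -> \bar R})
  (prior : Theta -> R) (obs : Y -> Theta -> R)
  (phi : Theta -> Y -> R) (f : Theta -> Y -> R) :
  sigma_finite setT muT -> sigma_finite setT muY ->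
  (* prior density *)
  measurable_fun setT prior -> (forall th, (0 <= prior th)%R) ->
  \int[muT]_th (prior th)%:E = 1 ->
  (* observation density *)
  measurable_fun setT (fun p : Theta * Y => obs p.2 p.1) ->
  (forall y th, (0 <= obs y th)%R) ->
  (forall th, \int[muY]_y (obs y th)%:E = 1) ->
  (* posterior family *)
  measurable_fun setT (fun p : Theta * Y => phi p.1 p.2) ->
  (forall th y, (0 <= phi th y)%R) ->
  (forall y, \int[muT]_th (phi th y)%:E = 1) ->
  (* test quantity *)
  measurable_fun setT (fun p : Theta * Y => f p.1 p.2) ->
  (* no ties *)
  ~ model_has_ties muT prior obs f ->
  ~ family_has_ties muT phi f ->
  (passes_continuous_SBC muT muY prior obs phi f <->
   forall x : R, (0 <= x <= 1)%R ->
     \int[muY]_y \int[muT]_tth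
        ((\1_[set t | (\int[muT]_th
                ((\1_[set s | (f s y < f t y)%R] th * phi th y)%R)%:E <= x%:E)%E] tth
          * (obs y tth * prior tth))%R)%:E
     = x%:E).
Proof.
move=> sfT sfY mprior prior0 prior1 mobs obs0 obs1 mphi phi0 _ mf _ no_ties.
have sbc_integralE x := integral_qphi_marg sfT sfY mprior prior0 prior1 mobs
  obs0 obs1 mphi phi0 mf no_ties x.
by split=> sbc x x01; have := sbc x x01; rewrite sbc_integralE.
Qed.
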